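(* Let $T(n)$ be the complete binary tree on $n$ vertices (every level except possibly the last completely filled, and the nodes of the last level as far left as possible), and let $D(n)$ be the digraph obtained from $T(n)$ by replacing each undirected edge $\{u,v\}$ by the two directed edges $(u,v)$ and $(v,u)$. Then $D(n)$ has zig-zag number at most $2$ (witnessed by a depth-first preorder of the vertices from the root), while its directed path-width is $\Omega(\log n)$.
   Context: A linear ordering $\omega=(v_1,\dots,v_n)$ of the vertices of a digraph is a $z$-topological ordering if every directed simple path has, for each $i$, at most $z$ edges with one endpoint in $\{v_1,\dots,v_i\}$ and the other in $\{v_{i+1},\dots,v_n\}$; the zig-zag number is the least such $z$. A directed path decomposition of $G=(V,E)$ is a sequence $X_1,\dots,X_p\subseteq V$ covering $V$, with $X_i\cap X_k\subseteq X_j$ for $i<j<k$, and such that for every edge $(u,v)$ there are $i\le j$ with $u\in X_i$, $v\in X_j$; its width is $\max_j|X_j|$, and the directed path-width is the minimum width. *)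

From mathcomp Require Import all_boot.
Set Implicit Arguments. Unset Strict Implicit. Unset Printing Implicit Defensive.

Section Digraphs.
Variable T : finType.
Variable E : rel T.

Definition is_ordering (w : seq T) : bool := uniq w && (size w == #|T|).

Definition simple_dpath (p : seq T) : bool :=
  uniq p && (if p is x :: q then path E x q else true).

Definition crossing (A : pred T) (p : seq T) : nat :=
  count (fun xy : T * T => (xy.1 \in A) != (xy.2 \in A)) (zip p (behead p)).

Definition z_topological (z : nat) (w : seq T) : Prop :=
  is_ordering w /\
  forall i : nat, forall p : seq T, simple_dpath p ->
    crossing (fun x => x \in take i w) p <= z.

(* Directed path decomposition X_1 .. X_p (given as a sequence, 0-indexed). *)
Definition is_dpd (X : seq {set T}) : Prop :=
  (forall v : T, exists2 i, i < size X & v \in nth set0 X i) /\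
  (forall i j k, i < j -> j < k -> k < size X ->
     nth set0 X i :&: nth set0 X k \subset nth set0 X j) /\
  (forall u v, E u v -> exists i j, [/\ i <= j, j < size X,
        u \in nth set0 X i & v \in nth set0 X j]).

Definition dpd_width (X : seq {set T}) : nat := \max_(B <- X) #|B|.

End Digraphs.

(* Complete binary tree on n vertices, in heap numbering 0..n-1:
   the parent of vertex i > 0 is (i-1)/2; this fills levels left to right. *)
Definition tree_parent (i : nat) : nat := i.-1./2.

Definition Dn_edge (n : nat) : rel 'I_n :=
  fun u v => ((0 < u) && (tree_parent u == v)) || ((0 < v) && (tree_parent v == u)).

(* Depth-first (left-first) preorder from the root 0; fuel n suffices. *)
Fixpoint preorder_aux (n fuel i : nat) : seq nat :=
  match fuel with
  | 0 => [::]
  | f.+1 => if i < n then i :: preorder_aux n f i.*2.+1 ++ preorder_aux n f i.*2.+2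
            else [::]
  end.

Definition preorder (n : nat) : seq 'I_n := pmap insub (preorder_aux n n 0).

From mathcomp Require Import all_boot zify.
Set Implicit Arguments. Unset Strict Implicit. Unset Printing Implicit Defensive.

(* Vertices of T(n) are 0..n-1 in heap order; vertex x carries the label x+1, so the
   ancestors of x are the vertices whose labels are (x+1) %/ 2^d.

   Part 1.  The depth-first preorder lists every vertex after its parent, so each of its
   prefixes S is closed under taking parents.  A simple path of a tree climbs and then
   descends; once it moves away from the root it never returns, and moving away from
   the root it can leave an ancestor-closed set but never re-enter it.  Hence a simple
   path crosses S at most twice: the preorder is a 2-topological ordering.

   Part 2.  Because every edge of D(n) is bidirected, in a directed path decomposition
   the bags containing a connected vertex set form an interval ("contiguous" sets).
   The key counting lemma [heavy_three]: if three disjoint branches, pairwise glued into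
   contiguous sets through a common connector, each have a bag holding k of their
   vertices, then some bag holds k+1 vertices of their union.  Applying it to the two
   grandchild subtrees of the left child and to the rest of the tree gives, by induction,
   a bag holding k+1 vertices of any complete subtree of height 2k; the whole tree has
   height about log2 n, which yields width >= log2 n / 2. *)

Lemma divn_exp2S m d : m %/ 2 ^ d.+1 = m %/ 2 ^ d %/ 2.
Proof. by rewrite expnSr divnMA. Qed.

Lemma divn_exp2_split m d e : d <= e -> m %/ 2 ^ e = m %/ 2 ^ d %/ 2 ^ (e - d).
Proof. by move=> lede; rewrite -divnMA -expnD subnKC. Qed.

Lemma half_cases m i : m %/ 2 = i.+1 -> m = i.*2.+2 \/ m = i.*2.+3.
Proof. by lia. Qed.

Definition descendant (i x : nat) : Prop := exists d, x.+1 %/ 2 ^ d = i.+1.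

Lemma descendant_refl i : descendant i i.
Proof. by exists 0; rewrite expn0 divn1. Qed.

Lemma descendant_ge i x : descendant i x -> i <= x.
Proof. by case=> d e; have := leq_div x.+1 (2 ^ d); rewrite e. Qed.

Lemma descendant_left i x : descendant i.*2.+1 x -> descendant i x.
Proof. by case=> d e; exists d.+1; rewrite divn_exp2S e; lia. Qed.

Lemma descendant_right i x : descendant i.*2.+2 x -> descendant i x.
Proof. by case=> d e; exists d.+1; rewrite divn_exp2S e; lia. Qed.

Lemma descendant_root x : descendant 0 x.
Proof.
have /andP[lo hi] := trunc_log_bounds (isT : 1 < 2) (ltn0Sn x).
exists (trunc_log 2 x.+1); apply/eqP; rewrite eqn_leq leq_divRL ?expn_gt0 // mul1n lo andbT.
by rewrite -ltnS ltn_divLR ?expn_gt0 // -expnS.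
Qed.

Lemma siblings_disjoint i x : descendant i.*2.+1 x -> descendant i.*2.+2 x -> False.
Proof.
case=> d ed [e ee]; case: (leqP d e) => [lede|ltde].
  have := leq_div (x.+1 %/ 2 ^ d) (2 ^ (e - d)).
  by rewrite -divn_exp2_split // ee ed ltnn.
have hk : 2 ^ 1 <= 2 ^ (d - e) by rewrite leq_pexp2l // subn_gt0.
have := leq_div2l (x.+1 %/ 2 ^ e) (expn_gt0 2 1) hk.
rewrite -divn_exp2_split ?(ltnW ltde) // ed ee expn1.
by clear; lia.
Qed.

Lemma parent_label y : 0 < y -> (tree_parent y).+1 = y.+1 %/ 2.
Proof. by rewrite /tree_parent -divn2; lia. Qed.

Lemma tree_parent_lt y : 0 < y -> tree_parent y < y.
Proof. by rewrite /tree_parent -divn2; lia. Qed.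

Lemma tree_parent_left i : tree_parent i.*2.+1 = i.
Proof. by rewrite /tree_parent /= doubleK. Qed.

Lemma tree_parent_right i : tree_parent i.*2.+2 = i.
Proof. by rewrite /tree_parent /= uphalf_double. Qed.

Lemma descendant_parent j y : 0 < y -> descendant j (tree_parent y) -> descendant j y.
Proof. by move=> y0 [d e]; exists d.+1; rewrite expnS divnMA -parent_label. Qed.

Definition below (i h x : nat) : bool :=
  has (fun d => x.+1 %/ 2 ^ d == i.+1) (iota 0 h.+1).

Lemma belowP i h x : reflect (exists2 d, d <= h & x.+1 %/ 2 ^ d = i.+1) (below i h x).
Proof.
apply: (iffP hasP) => [[d]|[d le_dh e]].
  by rewrite mem_iota add0n ltnS => /andP[_ le_dh] /eqP e; exists d.
by exists d; [rewrite mem_iota add0n ltnS le_dh | apply/eqP].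
Qed.

Lemma below_descendant i h x : below i h x -> descendant i x.
Proof. by case/belowP=> d _ e; exists d. Qed.

Lemma below_refl i h : below i h i.
Proof. by apply/belowP; exists 0; rewrite ?expn0 ?divn1. Qed.

Lemma below_mono i h h' x : h <= h' -> below i h x -> below i h' x.
Proof. by move=> le_hh' /belowP[d le_dh e]; apply/belowP; exists d; rewrite ?(leq_trans le_dh). Qed.

Lemma below0 i x : below i 0 x = (x == i).
Proof. by rewrite /below /= expn0 divn1 orbF eqSS. Qed.

Lemma belowS i h x :
  below i h.+1 x = [|| x == i, below i.*2.+1 h x | below i.*2.+2 h x].
Proof.
apply/belowP/or3P => [[[|d] le_dh e]|].
- by apply: Or31; move: e; rewrite expn0 divn1 => -[->].
- rewrite divn_exp2S in e; case: (half_cases e) => e'.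
    by apply: Or32; apply/belowP; exists d.
  by apply: Or33; apply/belowP; exists d.
case=> [/eqP ->|/belowP[d le_dh e]|/belowP[d le_dh e]].
- by exists 0; rewrite ?expn0 ?divn1.
- by exists d.+1; rewrite // divn_exp2S e; lia.
- by exists d.+1; rewrite // divn_exp2S e; lia.
Qed.

Definition child_arc {n : nat} (a b : 'I_n) : bool := (0 < b) && (tree_parent b == a).

Lemma take_pmap_insub (T : Type) (P : pred T) (sT : subType P) (s : seq T) i :
  all P s -> take i (pmap (insub : T -> option sT) s) = pmap insub (take i s).
Proof.
elim: s i => [|x s IH] [|i] //= /andP[Px Ps]; first by rewrite insubT.
by rewrite insubT /= IH.
Qed.

Section Preorder.
Variable n : nat.

Local Notation walk := (preorder_aux n).

Lemma walk_descendant f i x : x \in walk f i -> x < n /\ descendant i x.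
Proof.
elim: f i => [|f IH] i //=; case: ifP => // lt_in.
rewrite inE mem_cat => /orP[/eqP ->|/orP[/IH|/IH] [lt_xn desc]].
- by split=> //; exact: descendant_refl.
- by split=> //; exact: descendant_left.
- by split=> //; exact: descendant_right.
Qed.

Lemma walk_complete f i x d : d < f -> x < n -> x.+1 %/ 2 ^ d = i.+1 -> x \in walk f i.
Proof.
elim: f i d => [|f IH] i d // lt_df lt_xn e.
have lt_in : i < n.
  by apply: leq_ltn_trans lt_xn; apply: descendant_ge; exists d.
rewrite /= lt_in inE mem_cat.
case: d lt_df e => [|d] lt_df e; first by move: e; rewrite expn0 divn1 => -[->]; rewrite eqxx.
rewrite divn_exp2S in e.
by case: (half_cases e) => /(IH _ d lt_df lt_xn) ->; rewrite ?orbT.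
Qed.

(* Distinct subtrees are explored by distinct parts of the walk. *)
Lemma walk_uniq f i : uniq (walk f i).
Proof.
elim: f i => [|f IH] i //=; case: ifP => // _.
have fresh j : i < j -> i \notin walk f j.
  by move=> lt_ij; apply/negP => /walk_descendant[_ /descendant_ge]; rewrite leqNgt lt_ij.
have [lt_l lt_r] : i < i.*2.+1 /\ i < i.*2.+2 by lia.
rewrite /= cat_uniq !IH mem_cat negb_or andbT /= !fresh //=.
apply/hasPn => x /walk_descendant[_ right]; apply/negP => /walk_descendant[_ left].
exact: siblings_disjoint left right.
Qed.

Lemma walk_parent_first f i y : 0 < y -> y \in walk f i -> tree_parent y \in walk f i ->
  index (tree_parent y) (walk f i) < index y (walk f i).
Proof.
move=> y0; have lt_py := tree_parent_lt y0.
elim: f i => [|f IH] i //=; case: ifP => // lt_in.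
set L := walk f i.*2.+1; set R := walk f i.*2.+2.
have desc z : z \in L ++ R -> descendant i.*2.+1 z \/ descendant i.*2.+2 z.
  by rewrite mem_cat => /orP[]/walk_descendant[_ ?]; [left|right].
have neq_i z : z \in L ++ R -> i != z.
  have [lt_l lt_r] : i < i.*2.+1 /\ i < i.*2.+2 by lia.
  by case/desc=> /descendant_ge le_z; rewrite neq_ltn (leq_trans _ le_z).
rewrite !inE => /orP[/eqP eyi|yLR].
  by subst y => /orP[/eqP|/desc[]/descendant_ge]; lia.
rewrite /= (negbTE (neq_i _ yLR)) => /orP[/eqP <-|pLR]; first by rewrite eqxx.
rewrite (negbTE (neq_i _ pLR)) ltnS !index_cat.
have notR z : descendant i.*2.+1 z -> z \notin R.
  by move=> l; apply/negP => /walk_descendant[_ r]; exact: siblings_disjoint l r.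
have notL z : descendant i.*2.+2 z -> z \notin L.
  by move=> r; apply/negP => /walk_descendant[_ l]; exact: siblings_disjoint l r.
case/desc: (pLR) => [/[dup] pl /(descendant_parent y0) yl | /[dup] pr /(descendant_parent y0) yr].
  move: yLR pLR; rewrite !mem_cat !(negbTE (notR _ _)) // !orbF => yL pL.
  by rewrite yL pL IH.
move: yLR pLR; rewrite !mem_cat !(negbTE (notL _ _)) //= => yR pR.
by rewrite ltn_add2l IH.
Qed.

Lemma walk_mem x : x < n -> x \in walk n 0.
Proof.
move=> lt_xn; have [d e] := descendant_root x.
have : 1 <= x.+1 %/ 2 ^ d by rewrite e.
rewrite leq_divRL ?expn_gt0 // mul1n => le_x.
apply: walk_complete e => //.
exact: leq_trans (ltn_expl d (isT : 1 < 2)) (leq_trans le_x lt_xn).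
Qed.

Lemma preorder_is_ordering : is_ordering (preorder n).
Proof.
have uniq_pre : uniq (preorder n) by apply: pmap_sub_uniq; apply: walk_uniq.
rewrite /is_ordering uniq_pre -(card_uniqP uniq_pre) /=; apply/eqP/eq_card => x.
by rewrite mem_pmap_sub (walk_mem (ltn_ord x)) inE.
Qed.

Lemma preorder_prefix_parent_closed i (x y : 'I_n) :
  child_arc x y -> y \in take i (preorder n) -> x \in take i (preorder n).
Proof.
have all_lt : all (fun z => z < n) (walk n 0) by apply/allP => z /walk_descendant[].
rewrite /preorder !take_pmap_insub // !mem_pmap_sub /= => /andP[y0 /eqP <-].
have lt_py := tree_parent_lt y0.
have mem_p : tree_parent y \in walk n 0 by apply: walk_mem; exact: ltn_trans lt_py (ltn_ord y).
have mem_y := walk_mem (ltn_ord y).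
rewrite (in_take _ mem_p) (in_take _ mem_y) => /(leq_trans _); apply; apply: ltnW.
exact: walk_parent_first mem_y mem_p.
Qed.

End Preorder.

Section Crossing.
Variables (n : nat) (S : pred 'I_n).
Hypothesis parent_closed : forall x y, child_arc x y -> y \in S -> x \in S.

Lemma crossing_cons x y q :
  crossing S [:: x, y & q] = ((x \in S) != (y \in S)) + crossing S (y :: q).
Proof. by []. Qed.

Lemma downward_crossing x q : path child_arc x q -> crossing S (x :: q) <= (x \in S).
Proof.
elim: q x => [|y q IH] x //= /andP[xy down_y]; rewrite crossing_cons.
have := IH _ down_y; have := parent_closed xy.
by case: (x \in S); case: (y \in S) => // /(_ isT).
Qed.

(* Once a simple path steps away from the root it keeps doing so: stepping back up
   would revisit the vertex it came from. *)
Lemma simple_path_downward x y q : uniq [:: x, y & q] -> path (@Dn_edge n) x (y :: q) ->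
  child_arc x y -> path child_arc x (y :: q).
Proof.
elim: q x y => [|z q IH] x y /=; first by rewrite andbT => _ _ ->.
move=> /andP[x_fresh uniq_yzq] /and3P[_ yz path_zq] xy; rewrite xy /=.
have yz_down : child_arc y z.
  move: yz; rewrite /Dn_edge => /orP[/andP[_ /eqP pyz]|//].
  move: xy => /andP[_ /eqP pyx]; case/negP: x_fresh.
  by rewrite !inE (_ : x = z) ?eqxx ?orbT //; apply: val_inj; rewrite /= -pyz pyx.
by have := IH y z uniq_yzq; rewrite /= yz path_zq yz_down => /(_ isT isT) /andP[].
Qed.

Lemma simple_path_crossing x q : uniq (x :: q) -> path (@Dn_edge n) x q ->
  crossing S (x :: q) <= (if x \in S then 1 else 2).
Proof.
elim: q x => [|y q IH] x; first by case: (x \in S).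
move=> uniq_xq path_xq; case xy: (child_arc x y).
  apply: leq_trans (downward_crossing (simple_path_downward uniq_xq path_xq xy)) _.
  by case: (x \in S).
move: path_xq => /= /andP[edge_xy path_yq].
have yx : child_arc y x.
  by case/orP: edge_xy => [yx|xy']; [exact: yx | rewrite /child_arc xy' in xy].
rewrite crossing_cons; have := IH y (proj2 (andP uniq_xq)) path_yq.
have := parent_closed yx.
by case: (x \in S); case: (y \in S) => /=; lia.
Qed.

End Crossing.

Theorem preorder_z_topological n : z_topological (@Dn_edge n) 2 (preorder n).
Proof.
split=> [|i [|x q] /andP[uniq_p path_p] //]; first exact: preorder_is_ordering.
have := simple_path_crossing (@preorder_prefix_parent_closed n i) uniq_p path_p.
by move/leq_trans; apply; case: ifP.
Qed.

Section PathDecomposition.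
Variables (T : finType) (E : rel T) (X : seq {set T}).
Hypothesis dpd : is_dpd E X.

Local Notation bag p := (nth set0 X p).

Definition meets (p : nat) (A : {set T}) : Prop := exists2 x, x \in A & x \in bag p.

Definition contiguous (A : {set T}) : Prop :=
  forall a q b, meets a A -> meets b A -> a <= q <= b -> meets q A.

Lemma bag_index_lt x p : x \in bag p -> p < size X.
Proof. by case: (ltnP p (size X)) => // le_Xp; rewrite nth_default // inE. Qed.

Lemma bag_convex x a q b : x \in bag a -> x \in bag b -> a <= q <= b -> x \in bag q.
Proof.
move=> xa xb /andP[]; rewrite leq_eqVlt => /orP[/eqP <- //|lt_aq].
rewrite leq_eqVlt => /orP[/eqP -> //|lt_qb].
have [_ [convex _]] := dpd.
by apply: (subsetP (convex a q b lt_aq lt_qb (bag_index_lt xb))); rewrite inE xa xb.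
Qed.

Lemma contiguous_set1 x : contiguous [set x].
Proof.
move=> a q b [_ /set1P -> xa] [_ /set1P -> xb] aqb.
by exists x; rewrite ?set11 // (bag_convex xa xb aqb).
Qed.

Lemma contiguous_setU (A B : {set T}) : contiguous A -> contiguous B ->
  (exists c, meets c A /\ meets c B) -> contiguous (A :|: B).
Proof.
have meetsU p (P Q : {set T}) : meets p P \/ meets p Q -> meets p (P :|: Q).
  by case=> -[x xP xp]; exists x; rewrite // inE xP ?orbT.
have meetsUE p : meets p (A :|: B) -> meets p A \/ meets p B.
  by case=> x /setUP[xA|xB] xp; [left|right]; exists x.
move=> contA contB [c [cA cB]] a q b /meetsUE[aA|aB] /meetsUE[bA|bB] /andP[le_aq le_qb];
  apply: meetsU.
- by left; apply: (contA a q b); rewrite ?le_aq.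
- have [le_qc|lt_cq] := leqP q c.
    by left; apply: (contA a q c); rewrite ?le_aq.
  by right; apply: (contB c q b); rewrite ?le_qb ?(ltnW lt_cq).
- have [le_qc|lt_cq] := leqP q c.
    by right; apply: (contB a q c); rewrite ?le_aq.
  by left; apply: (contA c q b); rewrite ?le_qb ?(ltnW lt_cq).
- by right; apply: (contB a q b); rewrite ?le_aq.
Qed.

Lemma shared_bag u v : E u v -> E v u -> exists c, u \in bag c /\ v \in bag c.
Proof.
have [_ [_ arcs]] := dpd => uv vu.
have [s [t [le_st _ us vt]]] := arcs _ _ uv.
have [s' [t' [le_st' _ vs' ut']]] := arcs _ _ vu.
have [le_tt'|lt_t't] := leqP t t'.
  by exists t; split=> //; apply: (bag_convex us ut'); rewrite le_tt' (leq_trans le_st).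
by exists t'; split=> //; apply: (bag_convex vs' vt); rewrite (ltnW lt_t't) (leq_trans le_st').
Qed.

Lemma contiguous_link (A B : {set T}) a b : contiguous A -> contiguous B ->
  a \in A -> b \in B -> E a b -> E b a -> contiguous (A :|: B).
Proof.
move=> contA contB aA bB ab ba; apply: contiguous_setU => //.
by have [c [ac bc]] := shared_bag ab ba; exists c; split; [exists a | exists b].
Qed.

Definition load (p : nat) (A : {set T}) : nat := #|bag p :&: A|.

Definition heavy (A : {set T}) (k : nat) : Prop := exists p, k <= load p A.

Lemma load_sub p (A B : {set T}) : A \subset B -> load p A <= load p B.
Proof. by move=> sAB; apply/subset_leq_card/setIS. Qed.

Lemma heavy_sub (A B : {set T}) k : A \subset B -> heavy A k -> heavy B k.
Proof. by move=> sAB [p hp]; exists p; apply: leq_trans hp (load_sub p sAB). Qed.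

Lemma heavy_width (A : {set T}) k : heavy A k -> k <= dpd_width X.
Proof.
case=> p /leq_trans; apply; have [lt_pX|le_Xp] := ltnP p (size X).
  apply: leq_trans (subset_leq_card (subsetIl _ _)) _.
  by apply: (leq_bigmax_seq (bag p)) => //; rewrite mem_nth.
by rewrite /load nth_default // set0I cards0.
Qed.

Lemma heavy_vertex (A : {set T}) x : x \in A -> heavy A 1.
Proof.
have [cover _] := dpd => xA; have [p _ xp] := cover x.
by exists p; rewrite card_gt0; apply/set0Pn; exists x; rewrite inE xp.
Qed.

Definition between (a b c : nat) : bool := (a <= b <= c) || (c <= b <= a).

Lemma between_median a b c : [|| between a b c, between b a c | between a c b].
Proof. by rewrite /between; lia. Qed.

Lemma load_between (M B : {set T}) k pa pb pc : contiguous M -> (forall x, x \in B -> x \in M -> False) ->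
  meets pa M -> meets pc M -> between pa pb pc -> k <= load pb B -> k < load pb (M :|: B).
Proof.
move=> contM disjBM ma mc mid le_k; apply: leq_ltn_trans le_k _; apply: proper_card.
have [w wM wb] : meets pb M.
  by case/orP: mid => mid; [apply: (contM pa pb pc) | apply: (contM pc pb pa)].
apply/properP; split; first exact/setIS/subsetUr.
by exists w; rewrite !inE ?wb ?wM //=; apply/negP => wB; exact: disjBM wB wM.
Qed.

(* Three disjoint branches A, B, C with a connector V: if each branch, together with
   V and another branch, is contiguous and each branch has a bag holding k of its
   vertices, then the bag of the middle branch holds k+1 vertices of the union. *)
Lemma heavy_three (A B C V : {set T}) k : 0 < k ->
  contiguous (B :|: V :|: C) -> (forall x, x \in A -> x \in B :|: V :|: C -> False) ->
  contiguous (A :|: V :|: C) -> (forall x, x \in B -> x \in A :|: V :|: C -> False) ->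
  contiguous (A :|: V :|: B) -> (forall x, x \in C -> x \in A :|: V :|: B -> False) ->
  heavy A k -> heavy B k -> heavy C k -> heavy (A :|: B :|: C :|: V) k.+1.
Proof.
move=> k0 contBC disjA contAC disjB contAB disjC [pa ha] [pb hb] [pc hc].
have meets_heavy p (P Q : {set T}) : k <= load p P -> P \subset Q -> meets p Q.
  move=> hP /(load_sub p)/(leq_trans (leq_trans k0 hP)).
  by rewrite card_gt0 => /set0Pn[x /setIP[xp xQ]]; exists x.
have heavy_mid (P Q R : {set T}) pp pq pr : between pp pq pr ->
    contiguous (P :|: V :|: R) -> (forall x, x \in Q -> x \in P :|: V :|: R -> False) ->
    k <= load pp P -> k <= load pq Q -> k <= load pr R ->
    P :|: V :|: R :|: Q \subset A :|: B :|: C :|: V -> heavy (A :|: B :|: C :|: V) k.+1.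
  move=> mid contPR disjQ hP hQ hR sub; exists pq; apply: leq_trans (load_sub pq sub).
  apply: load_between contPR disjQ _ _ mid hQ; [apply: meets_heavy hP _ | apply: meets_heavy hR _];
    by apply/subsetP => x; rewrite !inE; do !case: (_ \in _).
case/or3P: (between_median pa pb pc) => mid;
  [apply: (heavy_mid A B C pa pb pc) | apply: (heavy_mid B A C pb pa pc)
  | apply: (heavy_mid A C B pa pc pb)] => //;
  by apply/subsetP => x; rewrite !inE; do !case: (_ \in _).
Qed.

End PathDecomposition.

(* The vertex of a singleton is passed explicitly (it would otherwise be inferred
   from the unfolded statement of [contiguous]). *)
Arguments contiguous_set1 [T E X] dpd x.

Section TreeDecomposition.
Variable n : nat.

Definition subtree (i h : nat) : {set 'I_n} := [set x : 'I_n | below i h x].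

(* The subtree of height h below i is complete in T(n): its last vertex,
   (i+2) 2^h - 2, exists. *)
Definition full (i h : nat) : bool := i.+2 * 2 ^ h <= n.+1.

Lemma full_vertex i h : full i h -> i < n.
Proof. by rewrite /full => le; have := expn_gt0 2 h; nia. Qed.

Lemma full_left i h : full i h.+1 -> full i.*2.+1 h.
Proof. by rewrite /full expnS => le; have := expn_gt0 2 h; nia. Qed.

Lemma full_right i h : full i h.+1 -> full i.*2.+2 h.
Proof. by rewrite /full expnS => le; have := expn_gt0 2 h; nia. Qed.

Lemma full_mono i h h' : h' <= h -> full i h -> full i h'.
Proof. by move=> le_h'h; apply: leq_trans; rewrite leq_mul2l leq_pexp2l. Qed.

Lemma mem_subtree_root i h (lt_in : i < n) : Ordinal lt_in \in subtree i h.
Proof. by rewrite inE below_refl. Qed.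

Lemma subtree_descendant i h (x : 'I_n) : x \in subtree i h -> descendant i x.
Proof. by rewrite inE => /below_descendant. Qed.

Lemma subtree_mono i h h' : h <= h' -> subtree i h \subset subtree i h'.
Proof. by move=> le_hh'; apply/subsetP => x; rewrite !inE; exact: below_mono. Qed.

Lemma subtree0 i (lt_in : i < n) : subtree i 0 = [set Ordinal lt_in].
Proof. by apply/setP => x; rewrite !inE below0 -val_eqE. Qed.

Lemma subtreeS i h (lt_in : i < n) :
  subtree i h.+1 = Ordinal lt_in |: (subtree i.*2.+1 h :|: subtree i.*2.+2 h).
Proof. by apply/setP => x; rewrite !inE belowS -val_eqE orbA. Qed.

Lemma child_arc_left i (lt_in : i < n) (lt_ln : i.*2.+1 < n) :
  child_arc (Ordinal lt_in) (Ordinal lt_ln).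
Proof. by apply/andP; split; last exact/eqP/tree_parent_left. Qed.

Lemma child_arc_right i (lt_in : i < n) (lt_rn : i.*2.+2 < n) :
  child_arc (Ordinal lt_in) (Ordinal lt_rn).
Proof. by apply/andP; split; last exact/eqP/tree_parent_right. Qed.

Variable X : seq {set 'I_n}.
Hypothesis dpd : is_dpd (@Dn_edge n) X.

Lemma contiguous_tree_link (A B : {set 'I_n}) a b : contiguous X A -> contiguous X B ->
  a \in A -> b \in B -> child_arc a b || child_arc b a -> contiguous X (A :|: B).
Proof.
move=> contA contB aA bB arc.
have ab : Dn_edge a b by rewrite /Dn_edge -/(child_arc b a) -/(child_arc a b) orbC.
have ba : Dn_edge b a by rewrite /Dn_edge -/(child_arc b a) -/(child_arc a b).
exact: (contiguous_link dpd contA contB aA bB ab ba).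
Qed.

(* Complete subtrees are connected, hence contiguous. *)
Lemma subtree_contiguous h i : full i h -> contiguous X (subtree i h).
Proof.
elim: h i => [|h IH] i full_ih.
  by rewrite (subtree0 (full_vertex full_ih)); exact: contiguous_set1 dpd _.
have [full_l full_r] := (full_left full_ih, full_right full_ih).
pose root := Ordinal (full_vertex full_ih).
have root_l : contiguous X (root |: subtree i.*2.+1 h).
  apply: (contiguous_tree_link (contiguous_set1 dpd root) (IH _ full_l) (set11 root)
    (mem_subtree_root h (full_vertex full_l))).
  by rewrite child_arc_left.
rewrite (subtreeS _ (full_vertex full_ih)) setUA.
apply: (contiguous_tree_link root_l (IH _ full_r) (setU11 root _)
  (mem_subtree_root h (full_vertex full_r))).
by rewrite child_arc_right.
Qed.

(* The three branches of a complete subtree of height h+2 below i: the two grandchild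
   subtrees A and B under the left child, and the rest C of the tree (the root with its
   right subtree), joined through the connector V = {left child}. *)
Section Branches.
Variables (i h : nat).
Hypothesis full_i : full i h.+2.

Let full_l : full i.*2.+1 h.+1 := full_left full_i.
Let full_r : full i.*2.+2 h.+1 := full_right full_i.
Let root : 'I_n := Ordinal (full_vertex full_i).
Let left : 'I_n := Ordinal (full_vertex full_l).
Let A : {set 'I_n} := subtree (i.*2.+1).*2.+1 h.
Let B : {set 'I_n} := subtree (i.*2.+1).*2.+2 h.
Let C : {set 'I_n} := root |: subtree i.*2.+2 h.+1.
Let V : {set 'I_n} := [set left].

Lemma left_branches : A :|: V :|: B = subtree i.*2.+1 h.+1.
Proof. by rewrite (subtreeS _ (full_vertex full_l)) setUAC setUC. Qed.

Lemma subtree_branches : subtree i h.+2 = A :|: B :|: C :|: V.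
Proof.
rewrite (subtreeS _ (full_vertex full_i)) -left_branches.
apply/setP => x; rewrite !inE; bool_congr.
by case: (x == left); rewrite ?orbT ?orbF.
Qed.

Lemma grandchild_branch_contiguous g (lt_gn : g < n) :
  child_arc left (Ordinal lt_gn) -> full g h -> contiguous X (subtree g h :|: V :|: C).
Proof.
move=> arc full_g.
have GV : contiguous X (subtree g h :|: V).
  apply: (contiguous_tree_link (subtree_contiguous full_g) (contiguous_set1 dpd left)
    (mem_subtree_root _ lt_gn) (set11 left)).
  by rewrite arc orbT.
have GVr : contiguous X (subtree g h :|: V :|: [set root]).
  have left_in : left \in subtree g h :|: V by rewrite !inE eqxx orbT.
  apply: (contiguous_tree_link GV (contiguous_set1 dpd root) left_in (set11 root)).
  by rewrite child_arc_left orbT.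
have root_in : root \in subtree g h :|: V :|: [set root] by rewrite !inE eqxx orbT.
rewrite /C setUA.
apply: (contiguous_tree_link GVr (subtree_contiguous full_r) root_in
  (mem_subtree_root _ (full_vertex full_r))).
by rewrite child_arc_right.
Qed.

Lemma branch_A_disjoint x : x \in A -> x \in B :|: V :|: C -> False.
Proof.
move=> /subtree_descendant dA; have ge_x := descendant_ge dA.
case/setUP=> [/setUP[/subtree_descendant dB|/set1P xl]|/setU1P[xr|/subtree_descendant dR]].
- exact: siblings_disjoint dA dB.
- by move: ge_x; rewrite xl /left /=; lia.
- by move: ge_x; rewrite xr /root /=; lia.
- exact: siblings_disjoint (descendant_left dA) dR.
Qed.

Lemma branch_B_disjoint x : x \in B -> x \in A :|: V :|: C -> False.
Proof.
move=> /subtree_descendant dB; have ge_x := descendant_ge dB.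
case/setUP=> [/setUP[/subtree_descendant dA|/set1P xl]|/setU1P[xr|/subtree_descendant dR]].
- exact: siblings_disjoint dA dB.
- by move: ge_x; rewrite xl /left /=; lia.
- by move: ge_x; rewrite xr /root /=; lia.
- exact: siblings_disjoint (descendant_right dB) dR.
Qed.

Lemma branch_C_disjoint x : x \in C -> x \in A :|: V :|: B -> False.
Proof.
rewrite left_branches => xC /subtree_descendant dL; have ge_x := descendant_ge dL.
case/setU1P: xC => [xr|/subtree_descendant dR]; last exact: siblings_disjoint dL dR.
by move: ge_x; rewrite xr /root /=; lia.
Qed.

Lemma heavy_branches k :
  heavy X A k.+1 -> heavy X B k.+1 -> heavy X (subtree i.*2.+2 h) k.+1 ->
  heavy X (subtree i h.+2) k.+2.
Proof.
move=> hA hB hR; rewrite subtree_branches.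
have full_ll := full_left full_l; have full_lr := full_right full_l.
have hC : heavy X C k.+1.
  apply: heavy_sub hR; rewrite /C.
  exact: subset_trans (subtree_mono _ (leqnSn _)) (subsetU1 _ _).
apply: heavy_three branch_A_disjoint _ branch_B_disjoint _ branch_C_disjoint hA hB hC => //.
- have arc := child_arc_right (full_vertex full_l) (full_vertex full_lr).
  exact: (grandchild_branch_contiguous arc full_lr).
- have arc := child_arc_left (full_vertex full_l) (full_vertex full_ll).
  exact: (grandchild_branch_contiguous arc full_ll).
- by rewrite left_branches; exact: subtree_contiguous.
Qed.

End Branches.

Lemma heavy_subtree k i : full i k.*2 -> heavy X (subtree i k.*2) k.+1.
Proof.
elim: k i => [|k IH] i full_i.
  exact: (heavy_vertex dpd (mem_subtree_root _ (full_vertex full_i))).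
rewrite doubleS in full_i *.
have full_l := full_left full_i.
apply: (heavy_branches full_i (IH _ (full_left full_l)) (IH _ (full_right full_l))).
exact: IH (full_mono (leqnSn _) (full_right full_i)).
Qed.

(* T(n) contains a complete subtree of height about log2 n below the root. *)
Lemma pathwidth_lower_bound : 0 < n -> trunc_log 2 n <= 2 * dpd_width X.
Proof.
move=> n0; set t := trunc_log 2 n.+1.
have t0 : 0 < t by rewrite trunc_log_gt0.
have full_root : full 0 (t.-1./2.*2).
  apply: (full_mono (h := t.-1)); first by rewrite -[leqRHS](odd_double_half t.-1) leq_addl.
  by rewrite /full -expnS prednK //; exact: trunc_logP.
have := heavy_width (heavy_subtree full_root).
have : trunc_log 2 n <= t by apply: leq_trunc_log.
by move: t0; clear; lia.
Qed.

End TreeDecomposition.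

Theorem mainTheorem4 :
  (forall n : nat, z_topological (@Dn_edge n) 2 (preorder n)) /\
  (exists k N : nat, 0 < k /\
     forall n : nat, N <= n ->
       forall X : seq {set 'I_n}, is_dpd (@Dn_edge n) X ->
         trunc_log 2 n <= k * dpd_width X).
Proof.
split; first exact: preorder_z_topological.
exists 2, 1; split=> // n n0 X dpd.
exact: pathwidth_lower_bound dpd n0.
Qed.
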